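(* Define $h_n\in\,]0,\pi/4]$ by $\tan h_n=m_n$, and let $G(x)=\tfrac12\arctan(2\tan x)$ for $|x|<\pi/2$. Then $h_n=G^{\circ n}(\pi/4)$ for all $n\ge0$.
   Context: $(m_n)_{n\ge0}$ is the unique sequence of positive reals with $m_0=1$ and $(1+m_1+\cdots+m_n)m_n=1$ for $n\ge1$ (equivalently $m_{n+1}^2+m_{n+1}/m_n-1=0$). $G^{\circ n}$ denotes the $n$-fold composition, $G^{\circ0}=\mathrm{id}$. *)

From Stdlib Require Import Reals.
Open Scope R_scope.

(* The sequence (m_n): m_0 = 1, m_n > 0, and (1 + m_1 + ... + m_n) m_n = 1 for n >= 1.
   Note sum_f_R0 m n = m 0 + ... + m n = 1 + m 1 + ... + m n since m 0 = 1. *)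
Definition is_m_seq (m : nat -> R) : Prop :=
  m 0%nat = 1 /\ (forall n, 0 < m n) /\
  (forall n, (1 <= n)%nat -> sum_f_R0 m n * m n = 1).

Definition G (x : R) : R := / 2 * atan (2 * tan x).

Fixpoint iterR (n : nat) (f : R -> R) (x : R) : R :=
  match n with
  | O => x
  | S k => f (iterR k f x)
  end.

(* Since m_0 = 1, the defining relation says that the partial sum 1 + m_1 + ... + m_n
   equals 1/m_n; subtracting consecutive relations gives (1/m_n + m_(n+1)) m_(n+1) = 1,
   i.e. 2 m_n = 2 m_(n+1) / (1 - m_(n+1)^2).  This is the tangent double-angle formula:
   tan (2 h_(n+1)) = 2 tan h_n, and 2 h_(n+1) lies in ]-pi/2, pi/2[, so h_(n+1) = G(h_n). *)
From Stdlib Require Import Reals Lra Lia.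
Open Scope R_scope.

Section MSequence.

Variable m : nat -> R.
Hypothesis Hm : is_m_seq m.

Lemma m_seq_pos (n : nat) : 0 < m n.
Proof. destruct Hm as [_ [Hpos _]]. exact (Hpos n). Qed.

Lemma m_seq_partial_sum (n : nat) : sum_f_R0 m n = / m n.
Proof.
  destruct Hm as [H0 [_ Hsum]].
  pose proof (m_seq_pos n) as Hn.
  destruct n as [|n].
  - simpl. rewrite H0. field.
  - apply (Rmult_eq_reg_r (m (S n))); [|lra].
    rewrite (Hsum (S n)) by lia. field. lra.
Qed.

Lemma m_seq_rec (n : nat) : (/ m n + m (S n)) * m (S n) = 1.
Proof.
  destruct Hm as [_ [_ Hsum]].
  rewrite <- m_seq_partial_sum. exact (Hsum (S n) ltac:(lia)).
Qed.

Lemma m_seq_succ_lt_1 (n : nat) : m (S n) < 1.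
Proof.
  pose proof (m_seq_rec n). pose proof (m_seq_pos (S n)).
  assert (0 < / m n) by (apply Rinv_0_lt_compat, m_seq_pos).
  nra.
Qed.

Lemma m_seq_double_angle (n : nat) :
  2 * m n = 2 * m (S n) / (1 - m (S n) * m (S n)).
Proof.
  pose proof (m_seq_pos n). pose proof (m_seq_pos (S n)).
  assert (D : 1 - m (S n) * m (S n) = m (S n) * / m n).
  { rewrite <- (m_seq_rec n). ring. }
  rewrite D. field. lra.
Qed.

End MSequence.

Lemma tan_double (x : R) : - (PI / 4) < x < PI / 4 ->
  tan (2 * x) = 2 * tan x / (1 - tan x * tan x).
Proof.
  intros Hx. pose proof PI_RGT_0.
  apply tan_2a; try (apply Rgt_not_eq, cos_gt_0; lra).
  enough (Habs : Rabs (tan x) < 1) by (apply Rabs_def2 in Habs; nra).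
  rewrite <- tan_PI4. apply Rabs_def1.
  - apply tan_increasing; lra.
  - rewrite <- tan_neg. apply tan_increasing; lra.
Qed.

Lemma G_eq_of_tan_double (x y : R) : - (PI / 4) < y < PI / 4 ->
  tan (2 * y) = 2 * tan x -> G x = y.
Proof.
  intros Hy Htan. pose proof PI_RGT_0.
  unfold G. rewrite <- Htan, atan_tan; lra.
Qed.

Lemma lt_PI4_of_tan_lt_1 (x : R) : 0 < x <= PI / 4 -> tan x < 1 -> x < PI / 4.
Proof.
  intros [_ [Hlt | ->]] Htan; [exact Hlt|].
  rewrite tan_PI4 in Htan. lra.
Qed.

Theorem proposition4p1 (m h : nat -> R) :
  is_m_seq m ->
  (forall n, 0 < h n <= PI / 4 /\ tan (h n) = m n) ->
  forall n : nat, h n = iterR n G (PI / 4).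
Proof.
  intros Hm Hh n. pose proof PI_RGT_0.
  induction n as [|n IH]; simpl.
  - destruct (Hh 0%nat) as [H0 Htan]. destruct Hm as [Hm0 _].
    rewrite <- atan_1, <- Hm0, <- Htan, atan_tan; lra.
  - rewrite <- IH. symmetry.
    destruct (Hh n) as [_ Htan]. destruct (Hh (S n)) as [HS HtanS].
    assert (HSlt : h (S n) < PI / 4).
    { apply lt_PI4_of_tan_lt_1; [exact HS|].
      rewrite HtanS. exact (m_seq_succ_lt_1 m Hm n). }
    apply G_eq_of_tan_double; [lra|].
    rewrite tan_double by lra. rewrite Htan, HtanS.
    symmetry. exact (m_seq_double_angle m Hm n).
Qed.
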